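(* Let $P$ be a pattern and let $\mathcal{O}$ be the list of schedules output by the schedule generation procedure described in the context (with any fixed iteration orders). Then (i) no two distinct schedules in $\mathcal{O}$ are equivalent, and (ii) every schedule for $P$ is equivalent to some schedule in $\mathcal{O}$. That is, $\mathcal{O}$ contains exactly one representative of each equivalence class of schedules for $P$.
   Context: A pattern $P$ is a finite simple connected graph on $n$ labeled vertices; $\mathrm{Aut}(P)$ is its automorphism group (bijections $V(P)\to V(P)$ preserving adjacency and non-adjacency). A schedule for $P$ is a sequence $S=(S[0],\dots,S[n-1])$ listing every vertex of $P$ exactly once such that each $S[k]$ with $k\ge 1$ is adjacent in $P$ to some $S[j]$ with $j<k$. Two schedules $S,S'$ are equivalent if there is $\phi\in\mathrm{Aut}(P)$ with $\phi(S[i])=S'[i]$ for all $i$. Schedule generation procedure: call $\mathrm{Gen}((),\mathrm{Aut}(P))$, where $\mathrm{Gen}(s,A)$, for a partial sequence $s$ of distinct vertices and a set $A$ of automorphisms (in each call $A$ is exactly the set of automorphisms fixing every vertex of $s$), does the following. If $s$ contains all vertices of $P$, output $s$ and return. Otherwise let $C=V(P)$ if $s$ is empty, and otherwise let $C$ be the set of vertices not in $s$ that are adjacent to at least one vertex of $s$. Initialize a set $\mathrm{processed}=\emptyset$ (local to this call) and iterate over $v\in C$ in some fixed order: if $v\in\mathrm{processed}$, skip $v$; otherwise, for every $x\in A$ with $x(v)\neq v$ add $x(v)$ to $\mathrm{processed}$, and call $\mathrm{Gen}(s+(v),\{x\in A : x(v)=v\})$. *)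

From mathcomp Require Import all_boot all_fingroup.
Set Implicit Arguments. Unset Strict Implicit. Unset Printing Implicit Defensive.

(* A pattern: vertex type T (finite, labeled), adjacency relation e. *)
Definition simple_graph (T : finType) (e : rel T) : Prop :=
  symmetric e /\ irreflexive e.

Definition connected_graph (T : finType) (e : rel T) : Prop :=
  forall x y : T, connect e x y.

Definition Aut (T : finType) (e : rel T) : {set {perm T}} :=
  [set p : {perm T} | [forall x, forall y, e (p x) (p y) == e x y]].

Definition is_schedule (T : finType) (e : rel T) (S : seq T) : Prop :=
  [/\ uniq S, (forall v : T, v \in S) &
      (forall (s1 : seq T) (v : T) (s2 : seq T),
          S = s1 ++ v :: s2 -> s1 != [::] -> has (fun u => e u v) s1)].

Definition sched_equiv (T : finType) (e : rel T) (S S' : seq T) : Prop :=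
  exists2 phi : {perm T}, phi \in Aut e & map phi S = S'.

Definition candset (T : finType) (e : rel T) (s : seq T) : {set T} :=
  if s is [::] then [set: T]
  else [set v | (v \notin s) && has (fun u => e u v) s].

(* Gen(s, A), with a fuel argument bounding recursion depth (each call adds
   one vertex to s, so fuel #|T|.+1 suffices).  ord s is the fixed iteration
   order used in the call with partial sequence s. *)
Fixpoint gen (T : finType) (e : rel T) (ord : seq T -> seq T) (fuel : nat)
    (s : seq T) (A : {set {perm T}}) : seq (seq T) :=
  match fuel with
  | 0 => [::]
  | n.+1 =>
    if [forall v, v \in s] then [:: s]
    else
      let step (acc : {set T} * seq (seq T)) (v : T) :=
        if v \in acc.1 then acc
        else (acc.1 :|: (fun x : {perm T} => x v) @: [set x in A | x v != v],
              acc.2 ++ gen e ord n (rcons s v) [set x in A | x v == v]) in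
      (foldl step (set0, [::]) (ord s)).2
  end.

Definition schedules_output (T : finType) (e : rel T)
    (ord : seq T -> seq T) : seq (seq T) :=
  gen e ord #|T|.+1 [::] (Aut e).

(** Write [Stab s] for the automorphisms fixing every vertex of [s]; it is the
    set [A] of the call [Gen(s, A)].  By induction on the number of missing
    vertices, [Gen(s, Stab s)] outputs schedules extending [s], pairwise
    inequivalent, one in each equivalence class of schedules extending [s].
    The loop of [Gen(s, Stab s)] keeps a candidate [v] exactly when no earlier
    kept candidate moves to [v] under [Stab s], so, [Stab s] being a group, it
    keeps one candidate per [Stab s]-orbit.  Two schedules through different
    kept candidates [v], [w] are inequivalent, since an automorphism relating
    them fixes [s] and maps [v] to [w]; and a schedule continuing [s] with a
    candidate [u = x v] is mapped by [x^-1 \in Stab s] to one continuing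
    [s] with [v]. *)
From Pilot Require Import Defs.
From mathcomp Require Import all_boot all_fingroup.
Set Implicit Arguments. Unset Strict Implicit. Unset Printing Implicit Defensive.
Local Notation Aut := Defs.Aut.
Local Open Scope group_scope.

Section Automorphisms.
Variables (T : finType) (e : rel T).

Lemma AutP (x : {perm T}) :
  reflect (forall a b, e (x a) (x b) = e a b) (x \in Aut e).
Proof.
rewrite inE; apply: (iffP forallP) => [x_e a b | x_e a].
  by apply/eqP; move/forallP: (x_e a); apply.
by apply/forallP => b; rewrite x_e.
Qed.

Lemma Aut1 : (1 : {perm T}) \in Aut e.
Proof. by apply/AutP => a b; rewrite !perm1. Qed.

Lemma AutV (x : {perm T}) : x \in Aut e -> x^-1 \in Aut e.
Proof. by move/AutP=> x_e; apply/AutP => a b; rewrite -x_e !permKV. Qed.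

Lemma AutM (x y : {perm T}) : x \in Aut e -> y \in Aut e -> x * y \in Aut e.
Proof. by move/AutP=> x_e /AutP y_e; apply/AutP => a b; rewrite !permM y_e x_e. Qed.

Lemma sched_equiv_refl (S : seq T) : sched_equiv e S S.
Proof. by exists 1; [exact: Aut1 | rewrite (eq_map (@perm1 T)) map_id]. Qed.

Lemma sched_equiv_trans (S1 S2 S3 : seq T) :
  sched_equiv e S1 S2 -> sched_equiv e S2 S3 -> sched_equiv e S1 S3.
Proof.
case=> x x_Aut <- [y y_Aut <-]; exists (x * y); first exact: AutM.
by rewrite -map_comp; apply: eq_map => a; rewrite permM.
Qed.

Lemma is_schedule_map (x : {perm T}) (S : seq T) :
  x \in Aut e -> is_schedule e S -> is_schedule e (map x S).
Proof.
move=> /AutP x_e [S_uniq S_all S_adj]; split.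
- by rewrite (map_inj_uniq (@perm_inj _ x)).
- by move=> v; rewrite -(permKV x v) (mem_map (@perm_inj _ x)).
move=> s1 v s2 E s1_nil.
have E' : S = map x^-1 s1 ++ x^-1 v :: map x^-1 s2.
  by rewrite -[S](mapK (permK x)) E map_cat.
have s1_nil' : map x^-1 s1 != [::] by case: (s1) s1_nil.
move: (S_adj _ _ _ E' s1_nil'); rewrite has_map => /hasP [u u_s1 /= e_uv].
by apply/hasP; exists u => //; rewrite -(permKV x u) -(permKV x v) x_e.
Qed.

End Automorphisms.

Section Stabilizers.
Variables (T : finType) (e : rel T).

Definition stab (s : seq T) : {set {perm T}} :=
  [set x in Aut e | all (fun u => x u == u) s].

(* What a call [Gen(s, A)] adds to [processed] when it keeps [v]. *)
Definition orbit_moved (A : {set {perm T}}) (v : T) : {set T} :=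
  (fun x : {perm T} => x v) @: [set x in A | x v != v].

Lemma orbit_moved_neq (A : {set {perm T}}) v w : w \in orbit_moved A v -> w != v.
Proof. by case/imsetP => x; rewrite inE => /andP[_ x_v] ->. Qed.

Lemma stab_nil : stab [::] = Aut e.
Proof. by apply/setP => x; rewrite in_set andbT. Qed.

Lemma stabP s (x : {perm T}) :
  reflect (x \in Aut e /\ map x s = s) (x \in stab s).
Proof.
rewrite [x \in stab s]in_set; apply: (iffP andP) => -[x_Aut fix_s]; split => //.
  by elim: s fix_s => //= a s IH /andP[/eqP -> /IH ->].
by elim: s fix_s => //= a s IH [-> /IH ->]; rewrite eqxx.
Qed.

Lemma stabV s (x : {perm T}) : x \in stab s -> x^-1 \in stab s.
Proof.
case/stabP=> x_Aut fix_s; apply/stabP; split; first exact: AutV.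
by rewrite -{1}fix_s -map_comp (eq_map (permK x)) map_id.
Qed.

Lemma stab_rcons s v : [set x in stab s | x v == v] = stab (rcons s v).
Proof. by apply/setP => x; rewrite !in_set all_rcons -andbA [all _ _ && _]andbC. Qed.

Lemma orbit_moved_stab_sym s v w :
  w \in orbit_moved (stab s) v -> v \in orbit_moved (stab s) w.
Proof.
case/imsetP => x; rewrite inE => /andP[x_stab x_v] ->.
apply/imsetP; exists x^-1; last by rewrite permK.
by rewrite inE stabV //= permK eq_sym.
Qed.

End Stabilizers.

Section Representatives.
Variables (T : finType) (A : {set {perm T}}).

(* The candidates kept by the loop of [Gen(s, A)] over [l], when the set
   [processed] starts as [P]. *)
Fixpoint reps (P : {set T}) (l : seq T) : seq T :=
  if l is v :: l' then
    if v \in P then reps P l' else v :: reps (P :|: orbit_moved A v) l'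
  else [::].

Lemma gen_loopE (g : T -> seq (seq T)) l P L :
  (foldl (fun (acc : {set T} * seq (seq T)) (v : T) =>
      if v \in acc.1 then acc
      else (acc.1 :|: (fun x : {perm T} => x v) @: [set x in A | x v != v],
            acc.2 ++ g v)) (P, L) l).2
  = L ++ flatten (map g (reps P l)).
Proof.
elim: l P L => [|v l IH] P L /=; first by rewrite cats0.
by case: (v \in P); rewrite IH //= catA.
Qed.

Lemma mem_reps P l v : v \in reps P l -> v \in l.
Proof.
elim: l P => [|a l IH] P //=; rewrite in_cons.
case: (a \in P) => [/IH -> | ]; first by rewrite orbT.
by rewrite in_cons => /orP[-> | /IH ->]; rewrite ?orbT.
Qed.

Lemma reps_notin P l v : v \in reps P l -> v \notin P.
Proof.
elim: l P => [|a l IH] P //=.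
case a_P: (a \in P); first exact: IH.
rewrite in_cons => /orP[/eqP -> | /IH]; first by rewrite a_P.
by rewrite in_setU negb_or => /andP[].
Qed.

Lemma reps_uniq P l : uniq l -> uniq (reps P l).
Proof.
elim: l P => [|a l IH] P //= /andP[a_l l_uniq].
case: (a \in P); rewrite /= IH // andbT.
by apply: contra a_l; exact: mem_reps.
Qed.

Lemma reps_cover (P : {set T}) (l : seq T) (u : T) :
  u \in l -> [\/ u \in P, u \in reps P l |
                 exists2 v, v \in reps P l & u \in orbit_moved A v].
Proof.
elim: l P => [|a l IH] P //=; rewrite in_cons => /orP[/eqP -> | u_l].
  by case a_P: (a \in P); [constructor 1 | constructor 2; rewrite mem_head].
case a_P: (a \in P); first exact: IH.
case: (IH (P :|: orbit_moved A a) u_l) => [| u_reps | [v v_reps u_v]].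
- rewrite in_setU => /orP[u_P | u_a]; first by constructor 1.
  by constructor 3; exists a; rewrite ?mem_head.
- by constructor 2; rewrite in_cons u_reps orbT.
- by constructor 3; exists v; rewrite // in_cons v_reps orbT.
Qed.

Hypothesis orbit_moved_sym :
  forall v w, w \in orbit_moved A v -> v \in orbit_moved A w.

Lemma reps_orbit_moved P l v w :
  v \in reps P l -> w \in reps P l -> w \notin orbit_moved A v.
Proof.
move=> v_r w_r; apply/negP => w_v.
elim: l P v_r w_r => [|a l IH] P //=.
case: (a \in P); first exact: IH.
rewrite !in_cons => /orP[/eqP Eva | v_r] /orP[/eqP Ewa | w_r].
- by move: (orbit_moved_neq w_v); rewrite Eva Ewa eqxx.
- by move: (reps_notin w_r); rewrite in_setU -Eva w_v orbT.
- by move: (reps_notin v_r); rewrite in_setU -Ewa (orbit_moved_sym w_v) orbT.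
- exact: IH v_r w_r.
Qed.

End Representatives.

Section Invariant.
Variables (T : finType) (e : rel T).

Definition partial_schedule (s : seq T) :=
  uniq s /\ (forall s1 v s2, s = s1 ++ v :: s2 -> s1 != [::] ->
                            has (fun u => e u v) s1).

Lemma partial_schedule_rcons s v :
  partial_schedule s -> v \in candset e s -> partial_schedule (rcons s v).
Proof.
case=> s_uniq s_adj v_cand.
have [v_s v_adj] : v \notin s /\ (s != [::] -> has (fun u => e u v) s).
  by case: (s) v_cand => [|a s'] //=; rewrite inE => /andP[-> ->].
split; first by rewrite rcons_uniq v_s s_uniq.
move=> s1 v' s2; case/lastP: s2 => [|s2 w] E.
  by move: E; rewrite cats1 => /rcons_inj [<- <-].
move: E; rewrite -cat_rcons -rcons_cat => /rcons_inj [E _].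
by apply: s_adj; rewrite E cat_rcons.
Qed.

Lemma schedule_next_candset S s t :
  is_schedule e S -> S = s ++ t -> ~~ [forall v, v \in s] ->
  exists2 u, u \in candset e s & exists t', t = u :: t'.
Proof.
move=> [S_uniq S_all S_adj] E /forallPn [x x_s].
case: t E => [|u t'] E; first by move: (S_all x); rewrite E cats0 (negbTE x_s).
exists u; last by exists t'.
have u_s : u \notin s.
  by move: S_uniq; rewrite E cat_uniq => /and3P[_ /hasPn /(_ u (mem_head _ _))].
have u_adj : s != [::] -> has (fun a => e a u) s by apply: S_adj E.
by case: (s) u_s u_adj => [|a s'] u_s u_adj; rewrite inE // u_s u_adj.
Qed.

Definition gen_spec (s : seq T) (L : seq (seq T)) : Prop :=
  [/\ forall S, S \in L -> is_schedule e S /\ exists t, S = s ++ t,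
      uniq L,
      forall S S', S \in L -> S' \in L -> sched_equiv e S S' -> S = S'
    & forall S t, is_schedule e S -> S = s ++ t ->
        exists2 S', S' \in L & sched_equiv e S S'].

Lemma gen_spec_complete s :
  partial_schedule s -> [forall v, v \in s] -> gen_spec s [:: s].
Proof.
case=> s_uniq s_adj s_all.
have s_sched : is_schedule e s by split => // v; exact: (forallP s_all v).
split=> [S | // | S S' | S t [S_uniq _ _] E].
- by rewrite inE => /eqP ->; split; last by exists [::]; rewrite cats0.
- by rewrite !inE => /eqP -> /eqP ->.
exists s; first exact: mem_head.
case: t E => [|u t] E; first by rewrite E cats0; exact: sched_equiv_refl.
move: S_uniq; rewrite E cat_uniq => /and3P[_ /hasPn /(_ u (mem_head _ _))].
by rewrite /= (forallP s_all u).
Qed.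

Lemma uniq_flatten_extensions (s c : seq T) (g : T -> seq (seq T)) :
  uniq c -> {in c, forall v, uniq (g v)} ->
  {in c, forall v S, S \in g v -> exists t, S = rcons s v ++ t} ->
  uniq (flatten (map g c)).
Proof.
elim: c => [|v c IH] //= /andP[v_c c_uniq] g_uniq g_ext.
rewrite cat_uniq g_uniq ?mem_head //= IH //; last 2 first.
- by move=> w w_c; apply: g_uniq; rewrite in_cons w_c orbT.
- by move=> w w_c; apply: g_ext; rewrite in_cons w_c orbT.
rewrite andbT; apply/hasPn => S /flattenP [_ /mapP [w w_c ->] S_gw].
apply/negP => S_gv.
have [t Et] := g_ext v (mem_head _ _) S S_gv.
have [t' Et'] := g_ext w (@mem_behead _ (v :: c) w w_c) S S_gw.
move: Et'; rewrite Et !cat_rcons => /eqP; rewrite eqseq_cat // => /andP[_].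
by case/eqP=> Evw _; rewrite Evw w_c in v_c.
Qed.

Section Step.
Variables (s c : seq T) (g : T -> seq (seq T)).
Hypothesis s_incomplete : ~~ [forall v, v \in s].
Hypothesis c_uniq : uniq c.
Hypothesis g_spec : forall v, v \in c -> gen_spec (rcons s v) (g v).
Hypothesis c_orbit_moved :
  forall v w, v \in c -> w \in c -> w \notin orbit_moved (stab e s) v.
Hypothesis c_cover : forall u, u \in candset e s ->
  u \in c \/ exists2 v, v \in c & u \in orbit_moved (stab e s) v.

Let L := flatten (map g c).

Lemma mem_step_out S : reflect (exists2 v, v \in c & S \in g v) (S \in L).
Proof.
apply: (iffP flattenP) => [[_ /mapP [v v_c ->] S_g] | [v v_c S_g]].
  by exists v.
by exists (g v); rewrite ?map_f.
Qed.

Lemma step_out_extends v S : v \in c -> S \in g v ->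
  is_schedule e S /\ exists t, S = rcons s v ++ t.
Proof. by move=> /g_spec [g_ext _ _ _] /g_ext. Qed.

Lemma step_out_sound S : S \in L -> is_schedule e S /\ exists t, S = s ++ t.
Proof.
case/mem_step_out => v v_c /(step_out_extends v_c) [S_sched [t E]].
by split=> //; exists (v :: t); rewrite E cat_rcons.
Qed.

Lemma step_out_uniq : uniq L.
Proof.
apply: (@uniq_flatten_extensions s) => // [v /g_spec [] | v v_c S] //.
by case/(step_out_extends v_c) => _.
Qed.

Lemma step_out_inequiv S S' :
  S \in L -> S' \in L -> sched_equiv e S S' -> S = S'.
Proof.
case/mem_step_out => v v_c S_gv /mem_step_out [w w_c S'_gw] [x x_Aut Ex].
have [_ [t Et]] := step_out_extends v_c S_gv.
have [_ [t' Et']] := step_out_extends w_c S'_gw.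
have [Evw | v_neq_w] := eqVneq v w.
  subst w; have [_ _ gv_inequiv _] := g_spec v_c.
  by apply: gv_inequiv => //; exists x.
move: Ex; rewrite Et Et' !cat_rcons map_cat /= => /eqP.
rewrite eqseq_cat ?size_map // => /andP[/eqP x_s /eqP [x_v _]].
have /negP[] := c_orbit_moved v_c w_c.
apply/imsetP; exists x => //.
by rewrite inE x_v eq_sym v_neq_w andbT; apply/stabP.
Qed.

Lemma step_out_complete S t : is_schedule e S -> S = s ++ t ->
  exists2 S', S' \in L & sched_equiv e S S'.
Proof.
move=> S_sched E.
have [u u_cand [t' Et]] := schedule_next_candset S_sched E s_incomplete.
have {}E : S = rcons s u ++ t' by rewrite E Et cat_rcons.
have out_of_g v S1 : v \in c -> is_schedule e S1 -> (exists t1, S1 = rcons s v ++ t1) ->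
    exists2 S', S' \in L & sched_equiv e S1 S'.
  move=> v_c S1_sched [t1 E1]; have [_ _ _ gv_complete] := g_spec v_c.
  have [S' S'_gv S1_S'] := gv_complete _ _ S1_sched E1.
  by exists S'; first by apply/mem_step_out; exists v.
case: (c_cover u_cand) => [u_c | [v v_c /imsetP [x]]].
  by apply: out_of_g u_c S_sched _; exists t'.
rewrite inE => /andP[x_stab _] Eu.
have /stabP [xV_Aut xV_s] := stabV x_stab.
have [|S' S'_L S_S'] := out_of_g v (map x^-1 S) v_c (is_schedule_map xV_Aut S_sched).
  by exists (map x^-1 t'); rewrite E map_cat map_rcons xV_s Eu permK.
by exists S' => //; apply: sched_equiv_trans S_S'; exists x^-1.
Qed.

Lemma gen_spec_step : gen_spec s L.
Proof.
split; [exact: step_out_sound | exact: step_out_uniq |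
        exact: step_out_inequiv | exact: step_out_complete].
Qed.

End Step.

Lemma gen_spec_gen (ord : seq T -> seq T)
    (ord_candset : forall s, perm_eq (ord s) (enum (candset e s))) n s :
  partial_schedule s -> #|T| < size s + n ->
  gen_spec s (gen e ord n s (stab e s)).
Proof.
elim: n s => [|n IH] s s_partial s_size.
  case: s_partial => /card_uniqP s_card _.
  by rewrite addn0 -s_card ltnNge max_card in s_size.
rewrite /=; case: ifP => [s_all | /negbT s_incomplete].
  exact: gen_spec_complete.
rewrite gen_loopE cat0s.
have ord_cand v : (v \in ord s) = (v \in candset e s).
  by rewrite (perm_mem (ord_candset s)) mem_enum.
apply: gen_spec_step => //.
- by apply: reps_uniq; rewrite (perm_uniq (ord_candset s)) enum_uniq.
- move=> v /mem_reps v_ord; rewrite stab_rcons; apply: IH.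
    by apply: partial_schedule_rcons; rewrite // -ord_cand.
  by rewrite size_rcons addSnnS.
- by move=> v w; exact: (reps_orbit_moved (@orbit_moved_stab_sym _ e s)).
move=> u; rewrite -ord_cand => /(reps_cover (stab e s) set0) [||].
- by rewrite inE.
- by left.
- by right.
Qed.

End Invariant.

Theorem theorem3 (T : finType) (e : rel T)
    (Hsimple : simple_graph e) (Hconn : connected_graph e)
    (ord : seq T -> seq T)
    (Hord : forall s : seq T, perm_eq (ord s) (enum (candset e s))) :
  let O := schedules_output e ord in
  [/\ (forall S, S \in O -> is_schedule e S),
      (forall i j, i < size O -> j < size O ->
         sched_equiv e (nth [::] O i) (nth [::] O j) -> i = j)
    & (forall S, is_schedule e S -> exists2 S', S' \in O & sched_equiv e S S')].
Proof.
move=> O.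
have nil_partial : partial_schedule e [::] by split=> // [[]].
have := gen_spec_gen Hord nil_partial (ltnSn #|T|).
rewrite stab_nil -/(schedules_output e ord) -/O => -[O_sound O_uniq O_inequiv O_complete].
split=> [S /O_sound [] // | i j i_O j_O ij_equiv | S S_sched].
- apply/eqP; rewrite -(nth_uniq [::] i_O j_O O_uniq); apply/eqP.
  by apply: O_inequiv ij_equiv; exact: mem_nth.
- exact: O_complete S_sched erefl.
Qed.
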